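(* For every real $\omega>0$, $$\zeta(3)=-2\omega^2\sum_{m=1}^\infty\left(\frac{\pi^2m^2}{\omega^2}\log\Big(1+\frac{\omega^2}{\pi^2m^2}\Big)-1\right)+2\omega\,\mathrm{Li}_2(e^{-2\omega})+\mathrm{Li}_3(e^{-2\omega})-2\omega^2\log(e^{2\omega}-1)+\frac{(10\omega+3)\,\omega^2}{3}.$$
   Context: $\zeta$ is the Riemann zeta function and $\mathrm{Li}_k(z)=\sum_{n\ge1}z^n/n^k$ ($|z|\le1$) is the polylogarithm. *)

From Stdlib Require Import Reals.
From Coquelicot Require Import Coquelicot.
Open Scope R_scope.

(* Riemann zeta at 3: zeta(3) = sum_{n>=1} 1/n^3 (index shifted: n = k+1). *)
Definition zeta3 : R := Series (fun k : nat => / (INR (k + 1)) ^ 3).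

Definition Li (s : nat) (z : R) : R :=
  Series (fun k : nat => z ^ (k + 1) / (INR (k + 1)) ^ s).

(* The m-th term (m >= 1, written m = k+1) of the series in the theorem. *)
Definition term18 (w : R) (k : nat) : R :=
  let m := INR (k + 1) in
  (PI ^ 2 * m ^ 2 / w ^ 2) * ln (1 + w ^ 2 / (PI ^ 2 * m ^ 2)) - 1.

(* Let G(w) be the right-hand side. Since [d/dw Li_(s+1)(e^(-2w)) = -2 Li_s(e^(-2w))],
   [Li_1(q) = -ln(1 - q)], and the logarithmic series may be differentiated term by term, with
   derivative [-w^2 (coth w - 1/w)] by the partial-fraction expansion
   [coth w = 1/w + sum_(m>=1) 2w / (w^2 + PI^2 m^2)], the derivative of G vanishes on (0, oo).
   As w -> 0+, every term of G is O(w) except Li_3(e^(-2w)), which tends to zeta(3).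

   The partial fractions are the case x = 0 of
   [sum_(n in Z) w / (w^2 + (x + PI n)^2) = sinh 2w / (cosh 2w - cos 2x)], proved by Herglotz's
   trick: the difference D_w(x) of the two sides is PI-periodic, is O(w) uniformly in x for small
   w, and satisfies D_(2w)(x) = (D_w(x/2) + D_w(x/2 + PI/2)) / 2, so iterating the duplication
   forces D = 0. *)

From Stdlib Require Import Reals Lra Lia Factorial.
From Coquelicot Require Import Coquelicot.
Open Scope R_scope.

Ltac nonzero := repeat split; try (apply Rgt_not_eq; nra); try (apply Rlt_not_eq; nra).

(** * Real series *)

(* The generic Coquelicot lemmas, stated with [scal] and [plus], do not unify with real
   expressions such as [c * a n] until instantiated at [R]. *)
Lemma ex_series_Rle (a b : nat -> R) :
  (forall n, Rabs (a n) <= b n) -> ex_series b -> ex_series a.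
Proof. intros H Hb. apply (@ex_series_le R_AbsRing R_CompleteNormedModule a b); auto. Qed.

Lemma ex_series_Rscal (c : R) (a : nat -> R) : ex_series a -> ex_series (fun n => c * a n).
Proof. exact (@ex_series_scal_l R_AbsRing R_NormedModule c a). Qed.

Lemma ex_series_Rext (a b : nat -> R) : (forall n, a n = b n) -> ex_series a -> ex_series b.
Proof. exact (@ex_series_ext R_AbsRing R_NormedModule a b). Qed.

Lemma ex_series_Rplus (a b : nat -> R) :
  ex_series a -> ex_series b -> ex_series (fun n => a n + b n).
Proof. exact (@ex_series_plus R_AbsRing R_NormedModule a b). Qed.

Lemma Series_nonneg (a : nat -> R) : (forall n, 0 <= a n) -> ex_series a -> 0 <= Series a.
Proof.
  intros H E. rewrite <- (Rmult_0_l (Series a)), <- Series_scal_l.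
  apply Series_le; auto. intro n; rewrite Rmult_0_l; split; [lra|auto].
Qed.

Lemma is_lim_seq_Rscal (u : nat -> R) (c l : R) :
  is_lim_seq u l -> is_lim_seq (fun n => c * u n) (c * l).
Proof. exact (is_lim_seq_scal_l u c l). Qed.

Lemma is_lim_seq_eq (u : nat -> R) (l1 l2 : R) : is_lim_seq u l1 -> is_lim_seq u l2 -> l1 = l2.
Proof.
  intros H1 H2. apply is_lim_seq_unique in H1, H2. rewrite H1 in H2. now injection H2.
Qed.

Lemma is_lim_seq_subseq_dominated (a : nat -> R) (phi : nat -> nat) (b : nat -> R) :
  ex_series a -> (forall n, (phi n < phi (S n))%nat) -> (forall n, 0 <= b n <= a (phi n)) ->
  is_lim_seq b 0.
Proof.
  intros Ha Hphi Hb.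
  apply (is_lim_seq_le_le (fun _ => 0) b (fun n => a (phi n))); auto.
  - apply is_lim_seq_const.
  - apply (is_lim_seq_subseq a 0 phi); [apply eventually_subseq; auto|].
    apply ex_series_lim_0; auto.
Qed.

Lemma sqr_abs (z : R) : z ^ 2 = Rabs z * Rabs z.
Proof. rewrite <- Rabs_mult, Rabs_pos_eq; nra. Qed.

Lemma pow_le1 (x : R) (n : nat) : 0 <= x <= 1 -> x ^ n <= 1.
Proof.
  intro H. induction n as [|n IH]; simpl; [lra|].
  assert (0 <= x ^ n) by (apply pow_le; lra). nra.
Qed.

Lemma INR_succ_pos (k : nat) : 0 < INR (k + 1).
Proof. rewrite plus_INR; simpl; pose proof (pos_INR k); lra. Qed.

Lemma INR_succ_ge1 (k : nat) : 1 <= INR (k + 1).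
Proof. rewrite plus_INR; simpl; pose proof (pos_INR k); lra. Qed.

Lemma is_series_telescope_inv : is_series (fun k => / INR (k + 1) - / INR (k + 2)) 1.
Proof.
  assert (Hsum : forall N, sum_n (fun k => / INR (k + 1) - / INR (k + 2)) N = 1 - / INR (N + 2)).
  { induction N as [|N IH].
    - rewrite sum_O. simpl. field.
    - rewrite sum_Sn, IH. unfold plus; cbn -[INR].
      replace (S (N + 1))%nat with (N + 2)%nat by lia. ring. }
  change (is_lim_seq (sum_n (fun k => / INR (k + 1) - / INR (k + 2))) 1).
  apply (is_lim_seq_ext (fun N => 1 - / INR (N + 2))); [intro N; now rewrite Hsum|].
  assert (Hinv : is_lim_seq (fun N => / INR (N + 2)) 0).
  { apply (is_lim_seq_incr_n (fun N => / INR N) 2 0).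
    exact (is_lim_seq_inv INR p_infty is_lim_seq_INR ltac:(discriminate)). }
  pose proof (is_lim_seq_minus' _ _ 1 0 (is_lim_seq_const 1) Hinv) as H.
  rewrite Rminus_0_r in H. exact H.
Qed.

Lemma inv_sq_le_telescope (k : nat) :
  / INR (k + 1) ^ 2 <= 2 * (/ INR (k + 1) - / INR (k + 2)).
Proof.
  replace (INR (k + 2)) with (INR (k + 1) + 1) by (rewrite !plus_INR; simpl; ring).
  pose proof (INR_succ_ge1 k). set (x := INR (k + 1)) in *.
  replace (2 * (/ x - / (x + 1))) with (/ (x * (x + 1) / 2)) by (field; lra).
  apply Rinv_le_contravar; nra.
Qed.

Lemma inv_sq_pos (k : nat) : 0 <= / INR (k + 1) ^ 2.
Proof. apply Rlt_le, Rinv_0_lt_compat, pow_lt, INR_succ_pos. Qed.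

Lemma ex_series_inv_sq : ex_series (fun k => / INR (k + 1) ^ 2).
Proof.
  apply (ex_series_Rle _ (fun k => 2 * (/ INR (k + 1) - / INR (k + 2)))).
  - intro k. rewrite Rabs_pos_eq by apply inv_sq_pos. apply inv_sq_le_telescope.
  - apply ex_series_Rscal. eexists; apply is_series_telescope_inv.
Qed.

Lemma Series_inv_sq_le : Series (fun k => / INR (k + 1) ^ 2) <= 2.
Proof.
  replace 2 with (Series (fun k => 2 * (/ INR (k + 1) - / INR (k + 2)))).
  - apply Series_le.
    + intro k; split; [apply inv_sq_pos|apply inv_sq_le_telescope].
    + apply ex_series_Rscal. eexists; apply is_series_telescope_inv.
  - rewrite Series_scal_l, (is_series_unique _ _ is_series_telescope_inv). ring.
Qed.

Lemma ex_series_inv_sq_bound (a : nat -> R) (c : R) :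
  (forall k, Rabs (a k) <= c * / INR (k + 1) ^ 2) -> ex_series a.
Proof.
  intro H. apply (ex_series_Rle _ (fun k => c * / INR (k + 1) ^ 2)); [exact H|].
  apply ex_series_Rscal, ex_series_inv_sq.
Qed.

Lemma Series_inv_sq_bound (a : nat -> R) (c : R) :
  (forall k, Rabs (a k) <= c * / INR (k + 1) ^ 2) -> 0 <= c ->
  Rabs (Series a) <= 2 * c.
Proof.
  intros H Hc.
  assert (Hb : ex_series (fun k => c * / INR (k + 1) ^ 2))
    by apply ex_series_Rscal, ex_series_inv_sq.
  eapply Rle_trans.
  { apply Series_Rabs, (ex_series_Rle _ (fun k => c * / INR (k + 1) ^ 2)); auto.
    intro k; rewrite Rabs_Rabsolu; apply H. }
  eapply Rle_trans.
  { apply (Series_le _ (fun k => c * / INR (k + 1) ^ 2)); auto.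
    intro k; split; [apply Rabs_pos|apply H]. }
  rewrite Series_scal_l. pose proof Series_inv_sq_le. nra.
Qed.

(** * The periodized Poisson kernel *)

Definition poisson_kernel (w y : R) : R := w / (w ^ 2 + y ^ 2).

Definition kernel_pair (w x : R) (k : nat) : R :=
  poisson_kernel w (x + PI * INR k) + poisson_kernel w (x - PI * INR k).

(* [sum_{n in Z} w / (w^2 + (x + PI n)^2)]; the pair at [k = 0] counts [n = 0] twice. *)
Definition periodized_kernel (w x : R) : R := Series (kernel_pair w x) - poisson_kernel w x.

Lemma poisson_kernel_pos w y : 0 < w -> 0 < poisson_kernel w y.
Proof. intro. unfold poisson_kernel. apply Rdiv_lt_0_compat; nra. Qed.

Lemma poisson_kernel_scale w y : 0 < w -> poisson_kernel w y = 2 * poisson_kernel (2 * w) (2 * y).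
Proof. intro. unfold poisson_kernel. field. nonzero. Qed.

Lemma kernel_pair_nonneg w x k : 0 < w -> 0 <= kernel_pair w x k.
Proof.
  intro Hw. unfold kernel_pair.
  pose proof (poisson_kernel_pos w (x + PI * INR k) Hw).
  pose proof (poisson_kernel_pos w (x - PI * INR k) Hw). lra.
Qed.

Lemma PI_ge3 : 3 <= PI.
Proof. pose proof PI2_3_2. lra. Qed.

Lemma poisson_kernel_far w K z : 0 < w -> 0 <= K -> PI * (K - 1) <= Rabs z ->
  poisson_kernel w z <= 8 * (1 + w ^ 2) / w * / (K + 1) ^ 2.
Proof.
  intros Hw HK Hz. pose proof PI_ge3.
  assert (Hsq : w ^ 2 * (K + 1) ^ 2 <= 8 * (1 + w ^ 2) * (w ^ 2 + z ^ 2)).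
  { assert (0 <= z ^ 2) by nra.
    destruct (Rle_lt_dec 1 K) as [HK1|HK1]; [|assert ((K + 1) ^ 2 <= 4) by nra; nra].
    assert (3 * (K - 1) <= Rabs z) by nra.
    assert (9 * (K - 1) ^ 2 <= z ^ 2) by (rewrite (sqr_abs z); nra).
    assert ((K + 1) ^ 2 <= 2 * (K - 1) ^ 2 + 8) by (pose proof (pow2_ge_0 (K - 3)); nra).
    assert (0 <= (K - 1) ^ 2) by nra. nra. }
  unfold poisson_kernel.
  replace (8 * (1 + w ^ 2) / w * / (K + 1) ^ 2)
    with (w * / (w ^ 2 * (K + 1) ^ 2 / (8 * (1 + w ^ 2)))) by (field; nonzero).
  unfold Rdiv. apply Rmult_le_compat_l; [lra|]. apply Rinv_le_contravar.
  - apply Rdiv_lt_0_compat; nra.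
  - apply (Rmult_le_reg_r (8 * (1 + w ^ 2))); [nra|].
    replace (w ^ 2 * (K + 1) ^ 2 * / (8 * (1 + w ^ 2)) * (8 * (1 + w ^ 2)))
      with (w ^ 2 * (K + 1) ^ 2) by (field; nonzero).
    nra.
Qed.

Lemma kernel_pair_bound w x k : 0 < w -> Rabs x <= PI ->
  Rabs (kernel_pair w x k) <= 16 * (1 + w ^ 2) / w * / INR (k + 1) ^ 2.
Proof.
  intros Hw Hx. rewrite Rabs_pos_eq by (apply kernel_pair_nonneg; auto).
  pose proof (pos_INR k) as Hk. pose proof PI_RGT_0.
  rewrite plus_INR. change (INR 1) with 1.
  assert (Hfar : PI * (INR k - 1) <= Rabs (x + PI * INR k) /\
                 PI * (INR k - 1) <= Rabs (x - PI * INR k)).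
  { replace (PI * (INR k - 1)) with (PI * INR k - PI) by ring.
    assert (0 <= PI * INR k) by nra. set (c := PI * INR k) in *.
    unfold Rabs in *; destruct (Rcase_abs x), (Rcase_abs (x + c)), (Rcase_abs (x - c));
      split; lra. }
  destruct Hfar as [F1 F2].
  pose proof (poisson_kernel_far w (INR k) _ Hw Hk F1).
  pose proof (poisson_kernel_far w (INR k) _ Hw Hk F2).
  unfold kernel_pair. lra.
Qed.

Lemma ex_series_kernel_pair w x : 0 < w -> Rabs x <= PI -> ex_series (kernel_pair w x).
Proof. intros. eapply ex_series_inv_sq_bound. intro k. apply kernel_pair_bound; auto. Qed.

(* The kernel at width [w] evaluated at [y / 2] is twice the kernel at width [2 w] at [y], so
   the shifts [x / 2 + PI k] and [x / 2 + PI / 2 + PI k] become the even and odd shifts of [x]. *)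
Lemma sum_kernel_pair_duplication w x N : 0 < w ->
  sum_n (kernel_pair w (x / 2)) N + sum_n (kernel_pair w (x / 2 + PI / 2)) N =
  2 * sum_n (kernel_pair (2 * w) x) (2 * N) + 2 * poisson_kernel (2 * w) (x + PI)
  + 2 * poisson_kernel (2 * w) (x + PI * INR (2 * N + 1)).
Proof.
  intro Hw. set (F := poisson_kernel (2 * w)).
  assert (FA : forall a b, a = b -> F a = F b) by congruence.
  assert (Half : forall y, poisson_kernel w y = 2 * F (2 * y))
    by (intro; apply poisson_kernel_scale, Hw).
  induction N as [|N IH].
  - rewrite !sum_O. unfold kernel_pair. rewrite !Half. fold F.
    change (INR (2 * 0 + 1)) with 1. change (INR 0) with 0.
    rewrite (FA (2 * (x / 2 + PI * 0)) x), (FA (2 * (x / 2 - PI * 0)) x),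
      (FA (2 * (x / 2 + PI / 2 + PI * 0)) (x + PI)), (FA (2 * (x / 2 + PI / 2 - PI * 0)) (x + PI)),
      (FA (x + PI * 1) (x + PI)), (FA (x + PI * 0) x), (FA (x - PI * 0) x)
      by field.
    ring.
  - rewrite !sum_Sn.
    replace (2 * S N)%nat with (S (S (2 * N))) by lia.
    rewrite !sum_Sn. repeat change (plus ?a ?b) with (Rplus a b).
    rewrite plus_INR, mult_INR in IH. change (INR 2) with 2 in IH. change (INR 1) with 1 in IH.
    set (n := INR N) in *.
    assert (Ea : kernel_pair w (x / 2) (S N)
                 = 2 * F (x + PI * (2 * n + 2)) + 2 * F (x - PI * (2 * n + 2))).
    { unfold kernel_pair. rewrite !Half, S_INR. fold n. f_equal; f_equal; apply FA; field. }
    assert (Eb : kernel_pair w (x / 2 + PI / 2) (S N)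
                 = 2 * F (x + PI * (2 * n + 3)) + 2 * F (x - PI * (2 * n + 1))).
    { unfold kernel_pair. rewrite !Half, S_INR. fold n. f_equal; f_equal; apply FA; field. }
    assert (Ec1 : kernel_pair (2 * w) x (S (2 * N))
                  = F (x + PI * (2 * n + 1)) + F (x - PI * (2 * n + 1))).
    { unfold kernel_pair. fold F. rewrite S_INR, mult_INR. fold n. f_equal; apply FA; simpl; ring. }
    assert (Ec2 : kernel_pair (2 * w) x (S (S (2 * N)))
                  = F (x + PI * (2 * n + 2)) + F (x - PI * (2 * n + 2))).
    { unfold kernel_pair. fold F. rewrite !S_INR, mult_INR. fold n. f_equal; apply FA; simpl; ring. }
    rewrite Ea, Eb, Ec1, Ec2.
    rewrite (FA (x + PI * INR (S (S (2 * N)) + 1)) (x + PI * (2 * n + 3)))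
      by (rewrite plus_INR, !S_INR, mult_INR; simpl; fold n; ring).
    lra.
Qed.

Lemma periodized_kernel_duplication w x : 0 < w -> Rabs x <= PI ->
  periodized_kernel w (x / 2) + periodized_kernel w (x / 2 + PI / 2) = 2 * periodized_kernel (2 * w) x.
Proof.
  intros Hw Hx. pose proof PI_RGT_0.
  assert (E1 : ex_series (kernel_pair w (x / 2))).
  { apply ex_series_kernel_pair; auto. unfold Rabs in *.
    destruct (Rcase_abs x), (Rcase_abs (x / 2)); lra. }
  assert (E2 : ex_series (kernel_pair w (x / 2 + PI / 2))).
  { apply ex_series_kernel_pair; auto. unfold Rabs in *.
    destruct (Rcase_abs x), (Rcase_abs (x / 2 + PI / 2)); lra. }
  assert (E3 : ex_series (kernel_pair (2 * w) x)) by (apply ex_series_kernel_pair; auto; lra).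
  set (u := fun N => sum_n (kernel_pair w (x / 2)) N + sum_n (kernel_pair w (x / 2 + PI / 2)) N).
  assert (L1 : is_lim_seq u (Series (kernel_pair w (x / 2)) + Series (kernel_pair w (x / 2 + PI / 2)))).
  { apply is_lim_seq_plus'; apply Series_correct; auto. }
  assert (L2 : is_lim_seq u (2 * Series (kernel_pair (2 * w) x) + 2 * poisson_kernel (2 * w) (x + PI) + 2 * 0)).
  { apply (is_lim_seq_ext (fun N => 2 * sum_n (kernel_pair (2 * w) x) (2 * N)
             + 2 * poisson_kernel (2 * w) (x + PI) + 2 * poisson_kernel (2 * w) (x + PI * INR (2 * N + 1)))).
    { intro N. unfold u. rewrite sum_kernel_pair_duplication; auto. }
    apply is_lim_seq_plus'; [apply is_lim_seq_plus'|].
    - apply is_lim_seq_Rscal, (is_lim_seq_subseq (sum_n (kernel_pair (2 * w) x)) _ (fun N => 2 * N)%nat).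
      + apply eventually_subseq. intro; lia.
      + apply Series_correct; auto.
    - apply is_lim_seq_const.
    - apply is_lim_seq_Rscal, (is_lim_seq_subseq_dominated (kernel_pair (2 * w) x) (fun N => 2 * N + 1)%nat);
        auto; [intro; lia|].
      intro N. split; [apply Rlt_le, poisson_kernel_pos; lra|].
      unfold kernel_pair. pose proof (poisson_kernel_pos (2 * w) (x - PI * INR (2 * N + 1))). lra. }
  pose proof (is_lim_seq_eq _ _ _ L1 L2) as HE.
  unfold periodized_kernel.
  rewrite (poisson_kernel_scale w (x / 2)), (poisson_kernel_scale w (x / 2 + PI / 2)) by lra.
  replace (2 * (x / 2)) with x by field. replace (2 * (x / 2 + PI / 2)) with (x + PI) by field.
  lra.
Qed.

Lemma sum_kernel_pair_shift w x N :
  sum_n (kernel_pair w (x - PI)) N - poisson_kernel w (x - PI) =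
  sum_n (kernel_pair w x) N - poisson_kernel w x
  - poisson_kernel w (x + PI * INR N) + poisson_kernel w (x - PI * INR (S N)).
Proof.
  induction N as [|N IH].
  - rewrite !sum_O. unfold kernel_pair. change (INR 0) with 0. change (INR 1) with 1.
    rewrite !Rmult_0_r, !Rplus_0_r, !Rminus_0_r, Rmult_1_r.
    replace (x - PI + 0) with (x - PI) by ring. ring.
  - rewrite !sum_Sn. repeat change (plus ?a ?b) with (Rplus a b).
    unfold kernel_pair at 2 4. rewrite !S_INR. rewrite S_INR in IH.
    replace (x - PI + PI * (INR N + 1)) with (x + PI * INR N) by ring.
    replace (x - PI - PI * (INR N + 1)) with (x - PI * (INR N + 1 + 1)) by ring.
    lra.
Qed.

Lemma periodized_kernel_shift w x : 0 < w -> Rabs x <= PI -> Rabs (x - PI) <= PI ->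
  periodized_kernel w (x - PI) = periodized_kernel w x.
Proof.
  intros Hw H1 H2.
  pose proof (ex_series_kernel_pair w x Hw H1) as E1.
  pose proof (ex_series_kernel_pair w (x - PI) Hw H2) as E2.
  set (u := fun N => sum_n (kernel_pair w (x - PI)) N - poisson_kernel w (x - PI)).
  assert (L1 : is_lim_seq u (Series (kernel_pair w (x - PI)) - poisson_kernel w (x - PI))).
  { apply is_lim_seq_minus'; [apply Series_correct; auto|apply is_lim_seq_const]. }
  assert (L2 : is_lim_seq u (Series (kernel_pair w x) - poisson_kernel w x - 0 + 0)).
  { apply (is_lim_seq_ext (fun N => sum_n (kernel_pair w x) N - poisson_kernel w x
             - poisson_kernel w (x + PI * INR N) + poisson_kernel w (x - PI * INR (S N)))).
    { intro N. unfold u. rewrite sum_kernel_pair_shift; auto. }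
    apply is_lim_seq_plus'; [apply is_lim_seq_minus'; [apply is_lim_seq_minus'|]|].
    - apply Series_correct; auto.
    - apply is_lim_seq_const.
    - apply (is_lim_seq_subseq_dominated (kernel_pair w x) (fun N => N)); auto.
      intro N. split; [apply Rlt_le, poisson_kernel_pos; lra|].
      unfold kernel_pair. pose proof (poisson_kernel_pos w (x - PI * INR N)). lra.
    - apply (is_lim_seq_subseq_dominated (kernel_pair w x) S); auto.
      intro N. split; [apply Rlt_le, poisson_kernel_pos; lra|].
      unfold kernel_pair. pose proof (poisson_kernel_pos w (x + PI * INR (S N))). lra. }
  pose proof (is_lim_seq_eq _ _ _ L1 L2). unfold periodized_kernel. lra.
Qed.

(** * The closed form and its comparison with the kernel *)

(* [= sinh (2 w) / (cosh (2 w) - cos (2 x))] *)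
Definition kernel_closed_form (w x : R) : R :=
  (exp (2 * w) - exp (- (2 * w))) / (exp (2 * w) + exp (- (2 * w)) - 2 + 4 * sin x ^ 2).

Lemma exp_2w_gt1 w : 0 < w -> 1 < exp (2 * w).
Proof. intro. rewrite <- exp_0. apply exp_increasing. lra. Qed.

Lemma kernel_closed_form_duplication w x : 0 < w ->
  kernel_closed_form w (x / 2) + kernel_closed_form w (x / 2 + PI / 2) = 2 * kernel_closed_form (2 * w) x.
Proof.
  intro Hw. unfold kernel_closed_form.
  pose proof (exp_2w_gt1 w Hw) as Ha.
  assert (E4 : exp (2 * (2 * w)) = exp (2 * w) * exp (2 * w)) by (rewrite <- exp_plus; f_equal; ring).
  assert (E4' : exp (- (2 * (2 * w))) = / (exp (2 * w) * exp (2 * w))) by (rewrite <- E4; apply exp_Ropp).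
  rewrite E4, E4', exp_Ropp, sin_plus, sin_PI2, cos_PI2.
  assert (Hs : sin (x / 2) ^ 2 = (1 - cos x) / 2).
  { replace x with (2 * (x / 2)) at 2 by field. rewrite cos_2a_sin. field. }
  assert (Hc : cos (x / 2) ^ 2 = (1 + cos x) / 2).
  { replace x with (2 * (x / 2)) at 2 by field. rewrite cos_2a_cos. field. }
  assert (Hsx : sin x ^ 2 = 1 - cos x ^ 2) by (pose proof (sin2_cos2 x); unfold Rsqr in *; nra).
  replace ((sin (x / 2) * 0 + cos (x / 2) * 1) ^ 2) with (cos (x / 2) ^ 2) by ring.
  rewrite Hs, Hc, Hsx.
  set (a := exp (2 * w)) in *. set (c := cos x).
  assert (Hc1 : -1 <= c <= 1) by (unfold c; split; apply COS_bound).
  assert (0 < (a - 1) ^ 2) by nra.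
  assert (0 < a + / a - 2)
    by (replace (a + / a - 2) with ((a - 1) ^ 2 / a) by (field; lra); apply Rdiv_lt_0_compat; nra).
  assert (0 < a * a - 1) by nra.
  assert (0 <= (1 - c ^ 2) * (a * a)) by (apply Rmult_le_pos; nra).
  field. nonzero.
Qed.

Lemma kernel_closed_form_shift w x : kernel_closed_form w (x - PI) = kernel_closed_form w x.
Proof.
  unfold kernel_closed_form. rewrite sin_minus, cos_PI, sin_PI. f_equal. f_equal. ring.
Qed.

Definition exp_taylor3 (t : R) : R := 1 + t + t ^ 2 / 2 + t ^ 3 / 6.

Lemma is_series_exp (t : R) : is_series (fun k => t ^ k / INR (fact k)) (exp t).
Proof.
  eapply is_series_ext; [|exact (is_exp_Reals t)]. intro k.
  simpl. rewrite pow_n_pow. unfold scal; simpl. unfold mult; simpl. unfold Rdiv. ring.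
Qed.

Lemma is_series_exp_taylor3_error (t : R) :
  is_series (fun k => t ^ 4 * (t ^ k / INR (fact (4 + k)))) (exp t - exp_taylor3 t).
Proof.
  assert (H4 : is_series (fun k => t ^ (4 + k) / INR (fact (4 + k))) (exp t - exp_taylor3 t)).
  { apply (is_series_incr_n (fun k => t ^ k / INR (fact k)) 4); [lia|].
    replace (exp t - exp_taylor3 t + _) with (exp t); [apply is_series_exp|].
    simpl Init.Nat.pred. rewrite !sum_Sn, sum_O. repeat change (plus ?a ?b) with (Rplus a b).
    unfold exp_taylor3. simpl. field. }
  eapply is_series_ext; [|exact H4]. intro k. cbv beta.
  rewrite (pow_add t 4 k). unfold Rdiv. apply Rmult_assoc.
Qed.

Lemma exp_le_9 (t : R) : t <= 2 -> exp t <= 9.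
Proof.
  intro H. apply Rle_trans with (exp 2).
  - destruct (Req_dec t 2); [subst; lra|]. left; apply exp_increasing; lra.
  - replace 2 with (1 + 1) by ring. rewrite exp_plus.
    pose proof exp_le_3. pose proof (exp_pos 1). nra.
Qed.

Lemma exp_taylor3_error (t : R) : Rabs t <= 2 -> Rabs (exp t - exp_taylor3 t) <= 9 * t ^ 4.
Proof.
  intro Ht.
  rewrite <- (is_series_unique _ _ (is_series_exp_taylor3_error t)), Series_scal_l, Rabs_mult.
  rewrite (Rabs_pos_eq (t ^ 4)) by nra. rewrite Rmult_comm.
  apply Rmult_le_compat_r; [nra|].
  assert (Eabs : ex_series (fun k => Rabs t ^ k / INR (fact k))) by (eexists; apply is_series_exp).
  assert (Hb : forall k, Rabs (t ^ k / INR (fact (4 + k))) <= Rabs t ^ k / INR (fact k)).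
  { intro k. unfold Rdiv. rewrite Rabs_mult, <- RPow_abs, Rabs_inv.
    rewrite (Rabs_pos_eq (INR (fact (4 + k)))) by apply pos_INR.
    apply Rmult_le_compat_l; [apply pow_le, Rabs_pos|].
    apply Rinv_le_contravar; [apply lt_0_INR, lt_O_fact|apply le_INR, fact_le; lia]. }
  eapply Rle_trans.
  { apply Series_Rabs. eapply ex_series_Rle; [|exact Eabs]. intro k. rewrite Rabs_Rabsolu. apply Hb. }
  eapply Rle_trans.
  { apply Series_le; [|exact Eabs]. intro k; split; [apply Rabs_pos|apply Hb]. }
  rewrite (is_series_unique _ _ (is_series_exp (Rabs t))). apply exp_le_9; auto.
Qed.

Lemma exp_taylor3_le (t : R) : 0 <= t -> exp_taylor3 t <= exp t.
Proof.
  intro Ht.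
  assert (0 <= Series (fun k => t ^ 4 * (t ^ k / INR (fact (4 + k))))).
  { apply Series_nonneg; [|eexists; apply is_series_exp_taylor3_error].
    intro k. apply Rmult_le_pos; [nra|]. apply Rmult_le_pos; [apply pow_le; auto|].
    apply Rlt_le, Rinv_0_lt_compat, lt_0_INR, lt_O_fact. }
  rewrite (is_series_unique _ _ (is_series_exp_taylor3_error t)) in H. lra.
Qed.

Lemma exp_2w_expansions w : 0 < w -> w <= 1 ->
  Rabs (exp (2 * w) + exp (- (2 * w)) - 2 - 4 * w ^ 2) <= 288 * w ^ 4 /\
  2 * w ^ 2 <= exp (2 * w) + exp (- (2 * w)) - 2 /\
  Rabs (exp (2 * w) - exp (- (2 * w)) - 4 * w) <= 291 * w ^ 3.
Proof.
  intros Hw Hw1.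
  assert (Ea := exp_taylor3_error (2 * w) ltac:(rewrite Rabs_pos_eq; lra)).
  assert (Eb := exp_taylor3_error (- (2 * w)) ltac:(rewrite Rabs_Ropp, Rabs_pos_eq; lra)).
  pose proof (exp_taylor3_le (2 * w) ltac:(lra)) as La.
  pose proof (exp_ineq1_le (- (2 * w))) as Lb.
  unfold exp_taylor3 in *.
  set (ea := exp (2 * w)) in *. set (eb := exp (- (2 * w))) in *.
  set (A := ea - _) in Ea. set (B := eb - _) in Eb.
  replace ((- (2 * w)) ^ 4) with (16 * w ^ 4) in Eb by ring.
  replace ((2 * w) ^ 4) with (16 * w ^ 4) in Ea by ring.
  assert (Hw43 : w ^ 4 <= w ^ 3) by (replace (w ^ 4) with (w * w ^ 3) by ring; nra).
  assert (0 <= w ^ 3) by nra.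
  apply Rabs_le_between in Ea, Eb. unfold A, B in *.
  split; [|split]; [apply Rabs_le; split | |apply Rabs_le; split]; nra.
Qed.

Lemma sin_sqr_bounds x : Rabs x <= PI / 2 ->
  x ^ 2 - x ^ 4 / 3 <= sin x ^ 2 <= x ^ 2 /\ x ^ 2 / 9 <= sin x ^ 2.
Proof.
  intro Hx. pose proof PI_4.
  assert (E1 : sin x ^ 2 = sin (Rabs x) ^ 2)
    by (unfold Rabs; destruct (Rcase_abs x); [rewrite sin_neg|]; ring).
  rewrite E1, <- (pow2_abs x).
  replace (x ^ 4) with (Rabs x ^ 4) by (rewrite RPow_abs, Rabs_pos_eq; nra).
  set (y := Rabs x) in *. assert (Hy : 0 <= y) by apply Rabs_pos.
  destruct (sin_bound y 0 Hy ltac:(lra)) as [L U].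
  unfold sin_approx, sin_term in L, U. simpl in L, U.
  assert (y ^ 2 <= 4) by nra.
  assert (y - y ^ 3 / 6 <= sin y <= y) by (split; nra).
  assert (y / 3 <= y - y ^ 3 / 6) by nra.
  split; [split|]; nra.
Qed.

Lemma kernel_quotient_approx w x s c u : 0 < w -> w <= 1 ->
  Rabs (c - 4 * w ^ 2) <= 288 * w ^ 4 -> 2 * w ^ 2 <= c ->
  Rabs (s - 4 * w) <= 291 * w ^ 3 ->
  4 * x ^ 2 - 4 * x ^ 4 / 3 <= u -> u <= 4 * x ^ 2 -> 4 * x ^ 2 / 9 <= u ->
  Rabs (w / (w ^ 2 + x ^ 2) - s / (c + u)) <= 1350 * w.
Proof.
  intros Hw Hw1 Hc Hc2 Hs Hu1 Hu2 Hu3.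
  set (B := w ^ 2 + x ^ 2).
  assert (HB : 0 < B) by (unfold B; nra).
  assert (HD : 4 / 9 * B <= c + u) by (unfold B; nra).
  assert (0 < c + u) by nra.
  replace (w / B - s / (c + u))
    with ((w * (c - 4 * w ^ 2) + w * (u - 4 * x ^ 2) - (s - 4 * w) * B) / (B * (c + u)))
    by (unfold B; field; nonzero).
  assert (HN : Rabs (w * (c - 4 * w ^ 2) + w * (u - 4 * x ^ 2) - (s - 4 * w) * B) <= 581 * w * B ^ 2).
  { assert (w ^ 4 <= B ^ 2) by (unfold B; nra).
    assert (x ^ 4 <= B ^ 2) by (unfold B; nra).
    assert (w ^ 2 <= B) by (unfold B; nra).
    assert (T1 : Rabs (w * (c - 4 * w ^ 2)) <= 288 * w * B ^ 2)
      by (rewrite Rabs_mult, Rabs_pos_eq by lra; nra).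
    assert (T2 : Rabs (w * (u - 4 * x ^ 2)) <= 2 * w * B ^ 2).
    { rewrite Rabs_mult, (Rabs_pos_eq w) by lra.
      assert (Rabs (u - 4 * x ^ 2) <= 2 * B ^ 2) by (apply Rabs_le; split; nra). nra. }
    assert (T3 : Rabs ((s - 4 * w) * B) <= 291 * w * B ^ 2).
    { rewrite Rabs_mult, (Rabs_pos_eq B) by lra.
      assert (w ^ 3 * B <= w * B ^ 2)
        by (replace (w ^ 3 * B) with (w ^ 2 * (w * B)) by ring;
            replace (w * B ^ 2) with (B * (w * B)) by ring; apply Rmult_le_compat_r; nra).
      assert (Rabs (s - 4 * w) * B <= 291 * w ^ 3 * B) by (apply Rmult_le_compat_r; lra). lra. }
    eapply Rle_trans; [apply Rabs_triang|]. rewrite Rabs_Ropp.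
    pose proof (Rabs_triang (w * (c - 4 * w ^ 2)) (w * (u - 4 * x ^ 2))). lra. }
  rewrite Rabs_div by nonzero. rewrite (Rabs_pos_eq (B * (c + u))) by nra.
  apply (Rmult_le_reg_r (B * (c + u))); [nra|].
  unfold Rdiv. rewrite Rmult_assoc, Rinv_l by nonzero. rewrite Rmult_1_r.
  assert (4 / 9 * B ^ 2 <= B * (c + u)) by nra.
  assert (0 <= w * B ^ 2) by nra.
  nra.
Qed.

Lemma poisson_kernel_closed_form_close w x : 0 < w -> w <= 1 -> Rabs x <= PI / 2 ->
  Rabs (poisson_kernel w x - kernel_closed_form w x) <= 1350 * w.
Proof.
  intros Hw Hw1 Hx.
  destruct (sin_sqr_bounds x Hx) as [[S1 S2] S3].
  destruct (exp_2w_expansions w Hw Hw1) as [Ec [Ec2 Es]].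
  unfold poisson_kernel, kernel_closed_form.
  apply kernel_quotient_approx; auto; lra.
Qed.

(** * Herglotz's argument *)

Definition kernel_defect (w x : R) : R := periodized_kernel w x - kernel_closed_form w x.

Lemma periodized_kernel_split w x : 0 < w -> Rabs x <= PI ->
  periodized_kernel w x = poisson_kernel w x + Series (fun k => kernel_pair w x (S k)).
Proof.
  intros Hw Hx. unfold periodized_kernel.
  rewrite Series_incr_1 by (apply ex_series_kernel_pair; auto).
  unfold kernel_pair at 1. change (INR 0) with 0.
  rewrite Rmult_0_r, Rplus_0_r, Rminus_0_r. ring.
Qed.

Lemma kernel_tail_bound w x : 0 < w -> Rabs x <= PI / 2 ->
  Rabs (Series (fun k => kernel_pair w x (S k))) <= 2 * w.
Proof.
  intros Hw Hx.
  apply Series_inv_sq_bound; [|lra].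
  intro k. rewrite Rabs_pos_eq by (apply kernel_pair_nonneg; auto).
  pose proof PI_ge3. pose proof (pos_INR k).
  unfold kernel_pair. rewrite S_INR, plus_INR. change (INR 1) with 1.
  set (K := INR k + 1) in *. assert (1 <= K) by (unfold K; lra).
  assert (Bfar : forall z, PI * K - PI / 2 <= Rabs z -> poisson_kernel w z <= 4 / 9 * w * / K ^ 2).
  { intros z Hz. unfold poisson_kernel.
    assert (9 / 4 * K ^ 2 <= z ^ 2).
    { assert (3 / 2 * K <= Rabs z) by nra. rewrite (sqr_abs z). nra. }
    replace (4 / 9 * w * / K ^ 2) with (w / (9 / 4 * K ^ 2)) by (field; nonzero).
    unfold Rdiv. apply Rmult_le_compat_l; [lra|]. apply Rinv_le_contravar; nra. }
  assert (B1 : poisson_kernel w (x + PI * K) <= 4 / 9 * w * / K ^ 2).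
  { apply Bfar. pose proof (Rabs_triang (x + PI * K) (- x)) as T. rewrite Rabs_Ropp in T.
    replace (x + PI * K + - x) with (PI * K) in T by ring. rewrite Rabs_pos_eq in T by nra. lra. }
  assert (B2 : poisson_kernel w (x - PI * K) <= 4 / 9 * w * / K ^ 2).
  { apply Bfar. pose proof (Rabs_triang (x - PI * K) (- x)) as T. rewrite Rabs_Ropp in T.
    replace (x - PI * K + - x) with (- (PI * K)) in T by ring.
    rewrite Rabs_Ropp, Rabs_pos_eq in T by nra. lra. }
  assert (0 < / K ^ 2) by (apply Rinv_0_lt_compat; nra).
  nra.
Qed.

Lemma kernel_defect_small w x : 0 < w -> w <= 1 -> Rabs x <= PI / 2 ->
  Rabs (kernel_defect w x) <= 1352 * w.
Proof.
  intros Hw Hw1 Hx. unfold kernel_defect. pose proof PI_RGT_0.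
  rewrite periodized_kernel_split by (auto; lra).
  pose proof (poisson_kernel_closed_form_close w x Hw Hw1 Hx).
  pose proof (kernel_tail_bound w x Hw Hx).
  replace (poisson_kernel w x + Series (fun k => kernel_pair w x (S k)) - kernel_closed_form w x)
    with ((poisson_kernel w x - kernel_closed_form w x) + Series (fun k => kernel_pair w x (S k)))
    by ring.
  eapply Rle_trans; [apply Rabs_triang|]. lra.
Qed.

(* On [[PI/2, PI]] the bound comes from [[-PI/2, 0]] by periodicity. *)
Lemma kernel_defect_small_on_period w x : 0 < w -> w <= 1 -> 0 <= x <= PI ->
  Rabs (kernel_defect w x) <= 1352 * w.
Proof.
  intros Hw Hw1 Hx. pose proof PI_RGT_0.
  destruct (Rle_dec x (PI / 2)).
  - apply kernel_defect_small; auto. rewrite Rabs_pos_eq; lra.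
  - replace (kernel_defect w x) with (kernel_defect w (x - PI)).
    + apply kernel_defect_small; auto. rewrite Rabs_left1; lra.
    + unfold kernel_defect. rewrite kernel_closed_form_shift, periodized_kernel_shift; auto.
      * rewrite Rabs_pos_eq; lra.
      * rewrite Rabs_left1; lra.
Qed.

Lemma kernel_defect_duplication w x : 0 < w -> 0 <= x <= PI ->
  kernel_defect (2 * w) x = (kernel_defect w (x / 2) + kernel_defect w (x / 2 + PI / 2)) / 2.
Proof.
  intros Hw Hx. unfold kernel_defect.
  pose proof (periodized_kernel_duplication w x Hw ltac:(rewrite Rabs_pos_eq; lra)).
  pose proof (kernel_closed_form_duplication w x Hw). lra.
Qed.

Lemma kernel_defect_iterated_bound (k : nat) : forall w x, 0 < w -> w <= 2 ^ k -> 0 <= x <= PI ->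
  Rabs (kernel_defect w x) <= 1352 * w / 2 ^ k.
Proof.
  induction k as [|k IH]; intros w x Hw Hwk Hx.
  - simpl in *. rewrite Rdiv_1_r. apply kernel_defect_small_on_period; auto.
  - pose proof PI_RGT_0.
    assert (Hp : 0 < 2 ^ k) by (apply pow_lt; lra).
    simpl pow in *.
    replace w with (2 * (w / 2)) at 1 by field.
    rewrite kernel_defect_duplication by (auto; lra).
    pose proof (IH (w / 2) (x / 2) ltac:(lra) ltac:(lra) ltac:(lra)).
    pose proof (IH (w / 2) (x / 2 + PI / 2) ltac:(lra) ltac:(lra) ltac:(lra)).
    rewrite Rabs_div, (Rabs_pos_eq 2) by lra.
    eapply Rle_trans; [apply Rmult_le_compat_r; [lra|apply Rabs_triang]|].
    replace (1352 * w / (2 * 2 ^ k))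
      with ((1352 * (w / 2) / 2 ^ k + 1352 * (w / 2) / 2 ^ k) * / 2) by (field; lra).
    apply Rmult_le_compat_r; lra.
Qed.

Lemma INR_le_pow2 (n : nat) : INR n <= 2 ^ n.
Proof.
  induction n as [|n IH]; [simpl; lra|].
  rewrite S_INR. simpl pow. assert (1 <= 2 ^ n) by (apply pow_R1_Rle; lra). lra.
Qed.

Lemma kernel_defect_zero w x : 0 < w -> 0 <= x <= PI -> kernel_defect w x = 0.
Proof.
  intros Hw Hx.
  destruct (Req_dec (kernel_defect w x) 0) as [|Hne]; auto. exfalso.
  set (d := Rabs (kernel_defect w x)). assert (Hd : 0 < d) by (apply Rabs_pos_lt; auto).
  assert (Hwd : 0 < 1352 * w / d) by (apply Rdiv_lt_0_compat; lra).
  destruct (INR_archimed 1 (w + 1352 * w / d) ltac:(lra)) as [n Hn].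
  rewrite Rmult_1_r in Hn. pose proof (INR_le_pow2 n).
  assert (Hp : 0 < 2 ^ n) by (apply pow_lt; lra).
  pose proof (kernel_defect_iterated_bound n w x Hw ltac:(lra) Hx) as Hbound. fold d in Hbound.
  apply (Rmult_le_compat_r (2 ^ n)) in Hbound; [|lra].
  replace (1352 * w / 2 ^ n * 2 ^ n) with (1352 * w) in Hbound by (field; lra).
  assert (HL : 1352 * w / d < 2 ^ n) by lra.
  apply (Rmult_lt_compat_l d) in HL; auto.
  replace (d * (1352 * w / d)) with (1352 * w) in HL by (field; lra).
  lra.
Qed.

(* The case [x = 0] of [kernel_defect_zero]; note [coth w = (1 + e^(-2w)) / (1 - e^(-2w))]. *)
Lemma coth_partial_fractions w : 0 < w ->
  Series (fun k => 2 * w / (w ^ 2 + PI ^ 2 * INR (k + 1) ^ 2)) =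
  (1 + exp (- (2 * w))) / (1 - exp (- (2 * w))) - 1 / w.
Proof.
  intro Hw. pose proof PI_RGT_0.
  pose proof (kernel_defect_zero w 0 Hw ltac:(lra)) as H0. unfold kernel_defect in H0.
  rewrite periodized_kernel_split in H0 by (auto; rewrite Rabs_R0; lra).
  assert (E : Series (fun k => kernel_pair w 0 (S k))
              = Series (fun k => 2 * w / (w ^ 2 + PI ^ 2 * INR (k + 1) ^ 2))).
  { apply Series_ext. intro k. unfold kernel_pair, poisson_kernel.
    replace (INR (S k)) with (INR (k + 1)) by (f_equal; lia).
    pose proof (INR_succ_pos k). field. nonzero. }
  assert (Q0 : kernel_closed_form w 0 = (1 + exp (- (2 * w))) / (1 - exp (- (2 * w)))).
  { unfold kernel_closed_form. rewrite sin_0, exp_Ropp. pose proof (exp_2w_gt1 w Hw).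
    set (a := exp (2 * w)) in *. assert (0 < (a - 1) ^ 2) by nra. field. nonzero. }
  assert (F0 : poisson_kernel w 0 = 1 / w) by (unfold poisson_kernel; field; lra).
  lra.
Qed.

(** * Term-by-term differentiation *)

Lemma Series_quadratic_remainder (r K : nat -> R) (h : R) :
  ex_series K -> (forall k, Rabs (r k) <= K k * h ^ 2) ->
  ex_series r /\ Rabs (Series r) <= Series K * h ^ 2.
Proof.
  intros HK Hr.
  assert (HKh : ex_series (fun k => K k * h ^ 2))
    by (apply (ex_series_Rext (fun k => h ^ 2 * K k)); [intro; ring|apply ex_series_Rscal, HK]).
  split; [exact (ex_series_Rle _ _ Hr HKh)|].
  eapply Rle_trans.
  { apply Series_Rabs, (ex_series_Rle _ (fun k => K k * h ^ 2)); [|exact HKh].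
    intro k. rewrite Rabs_Rabsolu. apply Hr. }
  eapply Rle_trans; [apply (Series_le _ (fun k => K k * h ^ 2)); auto|].
  - intro k; split; [apply Rabs_pos|apply Hr].
  - rewrite Series_scal_r. lra.
Qed.

Lemma derivable_pt_lim_Series (f df : nat -> R -> R) (K : nat -> R) (x d : R) :
  0 < d ->
  (forall y, Rabs (y - x) < d -> ex_series (fun k => f k y)) ->
  ex_series (fun k => df k x) -> ex_series K -> (forall k, 0 <= K k) ->
  (forall k y, Rabs (y - x) < d -> Rabs (f k y - f k x - df k x * (y - x)) <= K k * (y - x) ^ 2) ->
  derivable_pt_lim (fun y => Series (fun k => f k y)) x (Series (fun k => df k x)).
Proof.
  intros Hd Hf Hdf HK HK0 Hr eps Heps.
  set (SK := Series K).
  assert (HSK : 0 <= SK) by (apply Series_nonneg; auto).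
  assert (Hpos : 0 < Rmin d (eps / (SK + 1))) by (apply Rmin_pos; auto; apply Rdiv_lt_0_compat; lra).
  exists (mkposreal _ Hpos). intros h Hh0 Hh. simpl in Hh.
  assert (Hh1 : Rabs h < d) by (eapply Rlt_le_trans; [exact Hh|apply Rmin_l]).
  assert (Hh2 : Rabs h < eps / (SK + 1)) by (eapply Rlt_le_trans; [exact Hh|apply Rmin_r]).
  assert (Hxh : Rabs (x + h - x) < d) by (replace (x + h - x) with h by ring; auto).
  assert (Hx0 : Rabs (x - x) < d) by (rewrite Rminus_diag, Rabs_R0; auto).
  set (r := fun k => f k (x + h) - f k x - df k x * h).
  destruct (Series_quadratic_remainder r K h HK) as [Er Br].
  { intro k. pose proof (Hr k (x + h) Hxh) as Hk. replace (x + h - x) with h in Hk by ring. exact Hk. }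
  assert (Sr : Series r = Series (fun k => f k (x + h)) - Series (fun k => f k x)
                          - Series (fun k => df k x) * h).
  { assert (Ed : ex_series (fun k => f k (x + h) - f k x)).
    { apply (ex_series_Rext (fun k => f k (x + h) + -1 * f k x)); [intro; ring|].
      apply ex_series_Rplus; [|apply ex_series_Rscal]; apply Hf; auto. }
    unfold r. rewrite Series_minus, Series_minus, Series_scal_r; auto.
    apply (ex_series_Rext (fun k => h * df k x)); [intro; ring|apply ex_series_Rscal; auto]. }
  replace ((Series (fun k => f k (x + h)) - Series (fun k => f k x)) / h - Series (fun k => df k x))
    with (Series r / h) by (rewrite Sr; field; auto).
  assert (Hah : 0 < Rabs h) by (apply Rabs_pos_lt; auto).
  rewrite Rabs_div by auto.
  apply (Rmult_lt_reg_r (Rabs h)); auto.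
  unfold Rdiv. rewrite Rmult_assoc, Rinv_l, Rmult_1_r by lra.
  assert (SK * Rabs h < eps).
  { apply (Rmult_lt_compat_l (SK + 1)) in Hh2; [|lra].
    replace ((SK + 1) * (eps / (SK + 1))) with eps in Hh2 by (field; lra). nra. }
  rewrite (sqr_abs h) in Br. fold SK in Br. nra.
Qed.

(** * Polylogarithms *)

Definition Li_coef (s n : nat) : R := match n with O => 0 | S _ => / INR n ^ s end.

Lemma Li_PSeries s z : Li s z = PSeries (Li_coef s) z.
Proof.
  unfold Li, PSeries. symmetry. rewrite Series_incr_1_aux; [|unfold Li_coef; ring].
  apply Series_ext. intro k. replace (k + 1)%nat with (S k) by lia.
  unfold Li_coef, Rdiv. ring.
Qed.

Lemma Rabs_Li_coef_le1 s n : Rabs (Li_coef s n) <= 1.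
Proof.
  destruct n as [|n]; unfold Li_coef; [rewrite Rabs_R0; lra|].
  assert (H1 : 1 <= INR (S n)) by (rewrite S_INR; pose proof (pos_INR n); lra).
  assert (1 <= INR (S n) ^ s) by (apply pow_R1_Rle; auto).
  rewrite Rabs_pos_eq by (apply Rlt_le, Rinv_0_lt_compat; lra).
  rewrite <- Rinv_1. apply Rinv_le_contravar; lra.
Qed.

Lemma CV_radius_Li_coef s q : Rabs q < 1 -> Rbar_lt (Rabs q) (CV_radius (Li_coef s)).
Proof.
  intro Hq.
  assert (H : Rbar_le 1 (CV_radius (Li_coef s))).
  { apply (proj1 (CV_radius_bounded (Li_coef s))).
    exists 1. intro n. rewrite pow1, Rmult_1_r. apply Rabs_Li_coef_le1. }
  destruct (CV_radius (Li_coef s)) as [r| |]; simpl in *; auto. lra.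
Qed.

Lemma PS_derive_Li_coef s q : q * PSeries (PS_derive (Li_coef (S s))) q = PSeries (Li_coef s) q.
Proof.
  symmetry. unfold PSeries at 1. rewrite Series_incr_1_aux.
  2: { simpl. unfold scal; simpl; unfold mult; simpl; ring. }
  unfold PSeries. rewrite <- Series_scal_l. apply Series_ext. intro k.
  unfold PS_derive, Li_coef.
  assert (0 < INR (S k)) by (rewrite S_INR; pose proof (pos_INR k); lra).
  assert (0 < INR (S k) ^ s) by (apply pow_lt; auto).
  match goal with |- ?a = ?b => change (@eq R a b) end.
  change (q ^ S k) with (q * q ^ k). change (INR (S k) ^ S s) with (INR (S k) * INR (S k) ^ s).
  field. nonzero.
Qed.

Lemma Li_derive s q : Rabs q < 1 ->
  derivable_pt_lim (Li (S s)) q (PSeries (PS_derive (Li_coef (S s))) q).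
Proof.
  intro Hq. apply is_derive_Reals.
  apply (is_derive_ext (PSeries (Li_coef (S s)))); [intro t; symmetry; apply Li_PSeries|].
  apply is_derive_PSeries, CV_radius_Li_coef; auto.
Qed.

Lemma Li1_ln q : 0 <= q < 1 -> Li 1 q = - ln (1 - q).
Proof.
  intro Hq. rewrite Li_PSeries.
  set (g := fun y => PSeries (Li_coef 1) y + ln (1 - y)).
  assert (Hd : forall y, Rabs y < 1 -> derivable_pt_lim g y 0).
  { intros y Hy.
    assert (Hy1 : y < 1) by (unfold Rabs in Hy; destruct (Rcase_abs y); lra).
    assert (E : PSeries (PS_derive (Li_coef 1)) y = / (1 - y)).
    { unfold PSeries. rewrite <- (is_series_unique _ _ (is_series_geom y Hy)).
      apply Series_ext. intro n. unfold PS_derive, Li_coef.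
      assert (0 < INR (S n)) by (rewrite S_INR; pose proof (pos_INR n); lra).
      match goal with |- ?a = ?b => change (@eq R a b) end. rewrite pow_1. field. lra. }
    replace 0 with (PSeries (PS_derive (Li_coef 1)) y + (- 1) * / (1 - y)) by (rewrite E; field; lra).
    apply derivable_pt_lim_plus.
    - apply is_derive_Reals, is_derive_PSeries, CV_radius_Li_coef; auto.
    - apply is_derive_Reals. auto_derive; [lra|field; lra]. }
  assert (Hg : g q = g 0).
  { destruct (Req_dec q 0) as [->|Hq0]; auto.
    destruct (MVT_cor2 g (fun _ => 0) 0 q ltac:(lra)) as [c [Hc _]]; [|lra].
    intros c Hc. apply Hd. rewrite Rabs_pos_eq; lra. }
  unfold g in Hg. rewrite PSeries_0 in Hg. simpl Li_coef in Hg. rewrite Rminus_0_r, ln_1 in Hg. lra.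
Qed.

(** * The logarithmic series *)

Definition pi_m_sq (k : nat) : R := PI ^ 2 * INR (k + 1) ^ 2.

Definition log_term (w : R) (k : nat) : R := pi_m_sq k * ln (1 + w ^ 2 / pi_m_sq k) - w ^ 2.

Definition log_term_deriv (x : R) (k : nat) : R := - 2 * x ^ 3 / (pi_m_sq k + x ^ 2).

Lemma pi_m_sq_ge k : 9 * INR (k + 1) ^ 2 <= pi_m_sq k /\ 9 <= pi_m_sq k.
Proof.
  unfold pi_m_sq. pose proof PI_ge3. pose proof (INR_succ_ge1 k).
  assert (1 <= INR (k + 1) ^ 2) by nra. assert (9 <= PI ^ 2) by nra. split; nra.
Qed.

Lemma ln_1p_le y : 0 <= y -> ln (1 + y) <= y.
Proof. intro. rewrite <- (ln_exp y) at 2. apply ln_le; [lra|apply exp_ineq1_le]. Qed.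

Lemma ln_1p_ge y : 0 <= y -> y - y ^ 2 / 2 <= ln (1 + y).
Proof.
  intro Hy. set (h := fun t => ln (1 + t) - t + t ^ 2 / 2).
  destruct (Req_dec y 0) as [->|Hy0]; [rewrite Rplus_0_r, ln_1; lra|].
  destruct (MVT_cor2 h (fun c => c ^ 2 / (1 + c)) 0 y ltac:(lra)) as [c [Hc Hc2]].
  { intros c Hc. apply is_derive_Reals. unfold h. auto_derive; [lra|field; lra]. }
  unfold h in Hc. rewrite Rplus_0_r, ln_1 in Hc.
  assert (0 <= c ^ 2 / (1 + c) * (y - 0)) by (apply Rmult_le_pos; [apply Rdiv_le_0_compat|]; nra).
  lra.
Qed.

Lemma Rabs_log_term_le w k : Rabs (log_term w k) <= w ^ 4 / 2 * / INR (k + 1) ^ 2.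
Proof.
  destruct (pi_m_sq_ge k) as [H1 H2]. pose proof (INR_succ_ge1 k).
  unfold log_term. set (a := pi_m_sq k) in *. set (y := w ^ 2 / a).
  assert (Hy : 0 <= y) by (unfold y; apply Rdiv_le_0_compat; nra).
  pose proof (ln_1p_le y Hy). pose proof (ln_1p_ge y Hy).
  replace (w ^ 2) with (a * y) by (unfold y; field; lra).
  apply Rle_trans with (a * (y ^ 2 / 2)); [apply Rabs_le; split; nra|].
  replace (a * (y ^ 2 / 2)) with (w ^ 4 / 2 * / a) by (unfold y; field; lra).
  apply Rmult_le_compat_l; [nra|]. apply Rinv_le_contravar; nra.
Qed.

Lemma ex_series_log_term w : ex_series (log_term w).
Proof. apply (ex_series_inv_sq_bound _ (w ^ 4 / 2)), Rabs_log_term_le. Qed.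

Lemma Rabs_log_term_deriv_le x k : Rabs (log_term_deriv x k) <= 2 * Rabs x ^ 3 * / INR (k + 1) ^ 2.
Proof.
  destruct (pi_m_sq_ge k) as [H1 H2]. pose proof (INR_succ_ge1 k). unfold log_term_deriv.
  assert (0 <= x ^ 2) by nra.
  rewrite Rabs_div by nonzero. rewrite (Rabs_pos_eq (pi_m_sq k + x ^ 2)) by nra.
  rewrite Rabs_mult, <- RPow_abs. replace (Rabs (-2)) with 2 by (rewrite Rabs_left; lra).
  unfold Rdiv. apply Rmult_le_compat_l.
  - pose proof (Rabs_pos x); apply Rmult_le_pos; [lra|apply pow_le; auto].
  - apply Rinv_le_contravar; nra.
Qed.

Lemma ex_series_log_term_deriv x : ex_series (log_term_deriv x).
Proof. apply (ex_series_inv_sq_bound _ (2 * Rabs x ^ 3)), Rabs_log_term_deriv_le. Qed.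

Lemma derivable_pt_lim_log_term k t : derivable_pt_lim (fun t => log_term t k) t (log_term_deriv t k).
Proof.
  destruct (pi_m_sq_ge k) as [H1 H2].
  apply is_derive_Reals. unfold log_term, log_term_deriv. auto_derive.
  - assert (0 <= t ^ 2 / pi_m_sq k) by (apply Rdiv_le_0_compat; nra). simpl in *. nra.
  - field. nonzero.
Qed.

Lemma cube_quotient_lipschitz a c x W : 1 <= a -> Rabs c <= W -> Rabs x <= W ->
  Rabs (c ^ 3 / (a + c ^ 2) - x ^ 3 / (a + x ^ 2)) <= (3 * W ^ 2 + W ^ 4) / a * Rabs (c - x).
Proof.
  intros Ha Hc Hx.
  assert (HW : 0 <= W) by (eapply Rle_trans; [apply Rabs_pos|eauto]).
  assert (Hc2 : c ^ 2 <= W ^ 2) by (rewrite (sqr_abs c); pose proof (Rabs_pos c); nra).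
  assert (Hx2 : x ^ 2 <= W ^ 2) by (rewrite (sqr_abs x); pose proof (Rabs_pos x); nra).
  assert (Hcx : Rabs (c * x) <= W ^ 2)
    by (rewrite Rabs_mult; pose proof (Rabs_pos c); pose proof (Rabs_pos x); nra).
  set (N := a * (c ^ 2 + c * x + x ^ 2) + c ^ 2 * x ^ 2).
  set (D := (a + c ^ 2) * (a + x ^ 2)).
  assert (HD : a * a <= D) by (unfold D; nra).
  replace (c ^ 3 / (a + c ^ 2) - x ^ 3 / (a + x ^ 2)) with ((c - x) * N / D)
    by (unfold N, D; field; nonzero).
  assert (HN : Rabs N <= (3 * W ^ 2 + W ^ 4) * a).
  { apply Rabs_le_between in Hcx.
    assert (0 <= c ^ 2 + c * x + x ^ 2 <= 3 * W ^ 2) by (split; nra).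
    assert (0 <= c ^ 2 * x ^ 2 <= W ^ 4) by (split; [|replace (W ^ 4) with (W ^ 2 * W ^ 2) by ring]; nra).
    unfold N. apply Rabs_le. split; nra. }
  rewrite Rabs_div, Rabs_mult, (Rabs_pos_eq D) by nra.
  pose proof (Rabs_pos (c - x)). pose proof (Rabs_pos N).
  replace (Rabs (c - x) * Rabs N / D) with (Rabs (c - x) * (Rabs N * / D)) by (unfold Rdiv; ring).
  rewrite (Rmult_comm _ (Rabs (c - x))).
  apply Rmult_le_compat_l; [lra|].
  apply Rle_trans with ((3 * W ^ 2 + W ^ 4) * a * / (a * a)).
  - apply Rmult_le_compat; [lra|apply Rlt_le, Rinv_0_lt_compat; nra|lra|apply Rinv_le_contravar; nra].
  - right. field. lra.
Qed.

Lemma log_term_deriv_lipschitz k c x W : Rabs c <= W -> Rabs x <= W ->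
  Rabs (log_term_deriv c k - log_term_deriv x k)
  <= 2 * (3 * W ^ 2 + W ^ 4) * / INR (k + 1) ^ 2 * Rabs (c - x).
Proof.
  intros Hc Hx. destruct (pi_m_sq_ge k) as [H1 H2]. pose proof (INR_succ_ge1 k).
  assert (0 <= W) by (eapply Rle_trans; [apply Rabs_pos|eauto]).
  pose proof (cube_quotient_lipschitz (pi_m_sq k) c x W ltac:(lra) Hc Hx) as L.
  unfold log_term_deriv.
  replace (-2 * c ^ 3 / (pi_m_sq k + c ^ 2) - -2 * x ^ 3 / (pi_m_sq k + x ^ 2))
    with (-2 * (c ^ 3 / (pi_m_sq k + c ^ 2) - x ^ 3 / (pi_m_sq k + x ^ 2))) by (field; nonzero).
  rewrite Rabs_mult. replace (Rabs (-2)) with 2 by (rewrite Rabs_left; lra).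
  rewrite !Rmult_assoc. apply Rmult_le_compat_l; [lra|].
  eapply Rle_trans; [exact L|]. unfold Rdiv. rewrite Rmult_assoc.
  apply Rmult_le_compat_l; [nra|]. apply Rmult_le_compat_r; [apply Rabs_pos|].
  apply Rinv_le_contravar; nra.
Qed.

Lemma log_term_taylor_remainder k x y : 0 < x -> Rabs (y - x) < x / 2 ->
  Rabs (log_term y k - log_term x k - log_term_deriv x k * (y - x))
  <= 2 * (3 * (2 * x) ^ 2 + (2 * x) ^ 4) * / INR (k + 1) ^ 2 * (y - x) ^ 2.
Proof.
  intros Hx Hy.
  set (phi := fun t => log_term t k - log_term x k - log_term_deriv x k * (t - x)).
  destruct (MVT_abs phi (fun t => log_term_deriv t k - log_term_deriv x k) x y) as [c [Hc Hcr]].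
  { intros c _. unfold phi. apply is_derive_Reals.
    apply (is_derive_ext (fun t => log_term t k - (log_term x k + log_term_deriv x k * (t - x))));
      [intro; simpl; ring|].
    replace (log_term_deriv c k - log_term_deriv x k)
      with (log_term_deriv c k - log_term_deriv x k * 1) by ring.
    apply (is_derive_minus (fun t => log_term t k)); [apply is_derive_Reals, derivable_pt_lim_log_term|].
    auto_derive; auto. }
  assert (Hphix : phi x = 0) by (unfold phi; ring).
  unfold phi in Hc at 1. rewrite Hphix, Rminus_0_r in Hc. rewrite Hc.
  assert (Hcx : Rabs (c - x) <= Rabs (y - x)).
  { unfold Rmin, Rmax in Hcr. destruct (Rle_dec x y);
      unfold Rabs; destruct (Rcase_abs (c - x)), (Rcase_abs (y - x)); lra. }
  assert (HcW : Rabs c <= 2 * x).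
  { unfold Rmin, Rmax in Hcr. unfold Rabs in *.
    destruct (Rle_dec x y), (Rcase_abs c), (Rcase_abs (y - x)); lra. }
  pose proof (log_term_deriv_lipschitz k c x (2 * x) HcW ltac:(rewrite Rabs_pos_eq; lra)) as L.
  assert (0 <= 2 * (3 * (2 * x) ^ 2 + (2 * x) ^ 4) * / INR (k + 1) ^ 2).
  { apply Rmult_le_pos; [nra|apply inv_sq_pos]. }
  rewrite (sqr_abs (y - x)).
  eapply Rle_trans; [apply Rmult_le_compat_r; [apply Rabs_pos|exact L]|].
  rewrite Rmult_assoc. apply Rmult_le_compat_l; auto.
  apply Rmult_le_compat_r; auto. apply Rabs_pos.
Qed.

Lemma derivable_pt_lim_Series_log_term w : 0 < w ->
  derivable_pt_lim (fun y => Series (log_term y)) w (Series (log_term_deriv w)).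
Proof.
  intro Hw.
  apply (derivable_pt_lim_Series (fun k y => log_term y k) (fun k x => log_term_deriv x k)
          (fun k => 2 * (3 * (2 * w) ^ 2 + (2 * w) ^ 4) * / INR (k + 1) ^ 2) w (w / 2)).
  - lra.
  - intros y _. apply ex_series_log_term.
  - apply ex_series_log_term_deriv.
  - apply ex_series_Rscal, ex_series_inv_sq.
  - intro k. apply Rmult_le_pos; [nra|apply inv_sq_pos].
  - intros k y Hy. apply log_term_taylor_remainder; auto.
Qed.

Lemma Series_log_term_deriv w : 0 < w ->
  Series (log_term_deriv w) = - w ^ 2 * ((1 + exp (- (2 * w))) / (1 - exp (- (2 * w))) - 1 / w).
Proof.
  intro Hw. rewrite <- coth_partial_fractions, <- Series_scal_l by auto.
  apply Series_ext. intro k. unfold log_term_deriv, pi_m_sq.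
  pose proof (INR_succ_pos k). pose proof PI_RGT_0.
  assert (0 < PI ^ 2 * INR (k + 1) ^ 2) by (apply Rmult_lt_0_compat; apply pow_lt; auto).
  field. nonzero.
Qed.

Lemma Rabs_Li_term_le s z k : (2 <= s)%nat -> Rabs z <= 1 ->
  Rabs (z ^ (k + 1) / INR (k + 1) ^ s) <= 1 * / INR (k + 1) ^ 2.
Proof.
  intros Hs Hz. pose proof (INR_succ_ge1 k). set (m := INR (k + 1)) in *.
  assert (0 < m ^ 2) by (apply pow_lt; lra).
  assert (m ^ 2 <= m ^ s) by (apply Rle_pow; auto; lia).
  rewrite Rabs_div by (apply Rgt_not_eq, pow_lt; lra).
  rewrite <- RPow_abs, (Rabs_pos_eq (m ^ s)) by (apply pow_le; lra).
  assert (Rabs z ^ (k + 1) <= 1) by (apply pow_le1; split; [apply Rabs_pos|auto]).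
  rewrite Rmult_1_l. unfold Rdiv.
  apply Rle_trans with (1 * / m ^ s).
  - apply Rmult_le_compat_r; [apply Rlt_le, Rinv_0_lt_compat; lra|auto].
  - rewrite Rmult_1_l. apply Rinv_le_contravar; auto.
Qed.

Lemma Rabs_Li_le s z : (2 <= s)%nat -> Rabs z <= 1 -> Rabs (Li s z) <= 2.
Proof.
  intros Hs Hz. rewrite <- (Rmult_1_r 2).
  apply Series_inv_sq_bound; [intro k; apply Rabs_Li_term_le; auto|lra].
Qed.

Lemma zeta3_Li : zeta3 = Li 3 1.
Proof. apply Series_ext. intro k. rewrite pow1. unfold Rdiv. ring. Qed.

Lemma one_sub_pow_le (q : R) (n : nat) : 0 <= q <= 1 -> 0 <= 1 - q ^ n <= INR n * (1 - q).
Proof.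
  intro Hq. induction n as [|n IH]; [simpl; lra|].
  rewrite S_INR. simpl pow.
  assert (0 <= q ^ n <= 1) by (split; [apply pow_le; lra|apply pow_le1; lra]).
  split; nra.
Qed.

Lemma Rabs_Li3_sub_zeta3 q : 0 <= q <= 1 -> Rabs (Li 3 q - zeta3) <= 2 * (1 - q).
Proof.
  intro Hq. rewrite zeta3_Li. unfold Li.
  assert (Hq' : Rabs q <= 1) by (rewrite Rabs_pos_eq; lra).
  rewrite <- Series_minus
    by (apply (ex_series_inv_sq_bound _ 1); intro k; apply Rabs_Li_term_le; auto;
        rewrite Rabs_R1; lra).
  apply Series_inv_sq_bound; [|lra]. intro k.
  pose proof (INR_succ_ge1 k). set (m := INR (k + 1)) in *.
  destruct (one_sub_pow_le q (k + 1) Hq) as [B1 B2]. fold m in B2.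
  assert (0 < m ^ 2) by (apply pow_lt; lra).
  rewrite pow1.
  replace (q ^ (k + 1) / m ^ 3 - 1 / m ^ 3) with (- ((1 - q ^ (k + 1)) / m ^ 3)) by (field; lra).
  rewrite Rabs_Ropp, Rabs_pos_eq by (apply Rdiv_le_0_compat; [lra|apply pow_lt; lra]).
  replace ((1 - q) * / m ^ 2) with ((1 - q) * m / m ^ 3) by (field; lra).
  unfold Rdiv. apply Rmult_le_compat_r; [apply Rlt_le, Rinv_0_lt_compat, pow_lt; lra|nra].
Qed.

Lemma ln_ge_1_sub_inv y : 0 < y -> 1 - / y <= ln y.
Proof.
  intro Hy. pose proof (exp_ineq1_le (ln (/ y))) as H.
  rewrite exp_ln, ln_Rinv in H by (auto; apply Rinv_0_lt_compat; auto). lra.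
Qed.

Lemma Rabs_ln_exp_2v_sub1_le v : 0 < v -> Rabs (ln (exp (2 * v) - 1)) <= 2 * v + / (2 * v).
Proof.
  intro Hv. pose proof (exp_ineq1_le (2 * v)).
  assert (Hup : ln (exp (2 * v) - 1) <= 2 * v) by (rewrite <- (ln_exp (2 * v)) at 2; apply ln_le; lra).
  assert (Hlo : 1 - / (2 * v) <= ln (exp (2 * v) - 1))
    by (apply Rle_trans with (ln (2 * v)); [apply ln_ge_1_sub_inv|apply ln_le]; lra).
  assert (0 < / (2 * v)) by (apply Rinv_0_lt_compat; lra).
  apply Rabs_le. split; lra.
Qed.

(** * The right-hand side is constant *)

Definition zeta3_rhs (w : R) : R :=
  -2 * Series (log_term w) + 2 * w * Li 2 (exp (- 2 * w)) + Li 3 (exp (- 2 * w))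
  - 2 * w ^ 2 * ln (exp (2 * w) - 1) + (10 * w + 3) * w ^ 2 / 3.

Lemma derivable_pt_lim_Li_exp s w : 0 < w ->
  derivable_pt_lim (fun w => Li (S s) (exp (- 2 * w))) w (-2 * Li s (exp (- 2 * w))).
Proof.
  intro Hw. set (q := exp (- 2 * w)).
  assert (Hq : 0 < q < 1)
    by (unfold q; split; [apply exp_pos|rewrite <- exp_0; apply exp_increasing; lra]).
  replace (-2 * Li s q) with (PSeries (PS_derive (Li_coef (S s))) q * (-2 * q))
    by (rewrite Li_PSeries, <- PS_derive_Li_coef; ring).
  apply (derivable_pt_lim_comp (fun w => exp (- 2 * w)) (Li (S s)) w (-2 * q)).
  - apply is_derive_Reals. auto_derive; auto. unfold q. ring.
  - apply Li_derive. rewrite Rabs_pos_eq; lra.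
Qed.

Lemma ln_exp_2w_sub1 w : 0 < w -> ln (exp (2 * w) - 1) = 2 * w + ln (1 - exp (-2 * w)).
Proof.
  intro Hw. pose proof (exp_2w_gt1 w Hw).
  assert (Hq : exp (-2 * w) = / exp (2 * w)) by (rewrite <- exp_Ropp; f_equal; ring).
  assert (/ exp (2 * w) < 1) by (rewrite <- Rinv_1; apply Rinv_lt_contravar; lra).
  rewrite <- (ln_exp (2 * w)) at 2. rewrite <- ln_mult; [|apply exp_pos|rewrite Hq; lra].
  f_equal. rewrite Hq. field. lra.
Qed.

(* The derivative of the logarithmic series is [-w^2 (coth w - 1/w)], which cancels the
   derivatives of the other four terms. *)
Lemma derivable_pt_lim_zeta3_rhs w : 0 < w -> derivable_pt_lim zeta3_rhs w 0.
Proof.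
  intro Hw.
  set (SF := fun y => Series (log_term y)).
  set (L2 := fun y => Li 2 (exp (- 2 * y))).
  set (L3 := fun y => Li 3 (exp (- 2 * y))).
  assert (D1 : is_derive SF w (Series (log_term_deriv w)))
    by (apply is_derive_Reals, derivable_pt_lim_Series_log_term; auto).
  assert (D2 : is_derive L2 w (-2 * Li 1 (exp (- 2 * w))))
    by (apply is_derive_Reals, (derivable_pt_lim_Li_exp 1); auto).
  assert (D3 : is_derive L3 w (-2 * Li 2 (exp (- 2 * w))))
    by (apply is_derive_Reals, (derivable_pt_lim_Li_exp 2); auto).
  pose proof (exp_2w_gt1 w Hw) as HE.
  assert (Hq : exp (-2 * w) = / exp (2 * w)) by (rewrite <- exp_Ropp; f_equal; ring).
  assert (HiE : / exp (2 * w) < 1) by (rewrite <- Rinv_1; apply Rinv_lt_contravar; lra).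
  assert (Hq1 : 0 <= exp (-2 * w) < 1)
    by (rewrite Hq; split; [apply Rlt_le, Rinv_0_lt_compat|]; lra).
  apply is_derive_Reals.
  change zeta3_rhs with (fun y => -2 * SF y + 2 * y * L2 y + L3 y
                                  - 2 * y ^ 2 * ln (exp (2 * y) - 1) + (10 * y + 3) * y ^ 2 / 3).
  auto_derive; [repeat split; try (eexists; eassumption); lra|].
  replace (Derive (fun x => SF x) w) with (Series (log_term_deriv w)) by (symmetry; apply is_derive_unique, D1).
  replace (Derive (fun x => L2 x) w) with (-2 * Li 1 (exp (- 2 * w))) by (symmetry; apply is_derive_unique, D2).
  replace (Derive (fun x => L3 x) w) with (-2 * Li 2 (exp (- 2 * w))) by (symmetry; apply is_derive_unique, D3).
  unfold L2. rewrite Series_log_term_deriv by auto.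
  replace (- (2 * w)) with (-2 * w) by ring.
  rewrite (Li1_ln _ Hq1).
  replace (exp (2 * w) + - (1)) with (exp (2 * w) - 1) by ring.
  rewrite ln_exp_2w_sub1 by auto.
  generalize (ln (1 - exp (-2 * w))) (Li 2 (exp (-2 * w))). intros l2 li2.
  rewrite Hq. field. nonzero.
Qed.

Lemma zeta3_rhs_const v w : 0 < v -> 0 < w -> zeta3_rhs v = zeta3_rhs w.
Proof.
  intros Hv Hw.
  assert (Hconst : forall a b, 0 < a < b -> zeta3_rhs a = zeta3_rhs b).
  { intros a b Hab.
    destruct (MVT_cor2 zeta3_rhs (fun _ => 0) a b ltac:(lra)) as [c [Hc _]]; [|lra].
    intros c Hc. apply derivable_pt_lim_zeta3_rhs. lra. }
  destruct (Rtotal_order v w) as [Hlt|[->|Hgt]]; auto.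
  symmetry; auto.
Qed.

Lemma zeta3_rhs_near0 v : 0 < v -> v <= 1 / 2 -> Rabs (zeta3_rhs v - zeta3) <= 20 * v.
Proof.
  intros Hv Hv2.
  set (q := exp (- 2 * v)).
  assert (Hq : 0 <= q <= 1).
  { unfold q. split; [apply Rlt_le, exp_pos|]. rewrite <- exp_0. left; apply exp_increasing; lra. }
  assert (Hq2 : 1 - q <= 2 * v) by (unfold q; pose proof (exp_ineq1_le (-2 * v)); lra).
  assert (Ha : Rabs (Series (log_term v)) <= v).
  { assert (v ^ 4 <= v) by (assert (v ^ 2 <= 1) by nra; assert (v ^ 3 <= 1) by nra; nra).
    assert (Rabs (Series (log_term v)) <= 2 * (v ^ 4 / 2))
      by (apply Series_inv_sq_bound; [apply Rabs_log_term_le|nra]).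
    lra. }
  assert (Hb : Rabs (2 * v * Li 2 q) <= 4 * v).
  { rewrite Rabs_mult, (Rabs_pos_eq (2 * v)) by lra.
    assert (Rabs (Li 2 q) <= 2) by (apply Rabs_Li_le; auto; rewrite Rabs_pos_eq; lra). nra. }
  pose proof (Rabs_Li3_sub_zeta3 q Hq) as Hc.
  assert (Hd : Rabs (2 * v ^ 2 * ln (exp (2 * v) - 1)) <= 2 * v).
  { rewrite Rabs_mult, (Rabs_pos_eq (2 * v ^ 2)) by nra.
    apply Rle_trans with (2 * v ^ 2 * (2 * v + / (2 * v))).
    - apply Rmult_le_compat_l; [nra|apply Rabs_ln_exp_2v_sub1_le; auto].
    - replace (2 * v ^ 2 * (2 * v + / (2 * v))) with (4 * v ^ 3 + v) by (field; lra). nra. }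
  assert (He : 0 <= (10 * v + 3) * v ^ 2 / 3 <= 3 * v) by (split; nra).
  unfold zeta3_rhs. fold q.
  set (A := Series (log_term v)) in *. set (B := 2 * v * Li 2 q) in *.
  set (D := 2 * v ^ 2 * ln (exp (2 * v) - 1)) in *. set (F := (10 * v + 3) * v ^ 2 / 3) in *.
  apply Rabs_le_between in Ha, Hb, Hc, Hd.
  apply Rabs_le. split; lra.
Qed.

Lemma zeta3_rhs_eq w : 0 < w -> zeta3_rhs w = zeta3.
Proof.
  intro Hw. destruct (Req_dec (zeta3_rhs w) zeta3) as [|Hne]; auto. exfalso.
  set (e := Rabs (zeta3_rhs w - zeta3)). assert (He : 0 < e) by (apply Rabs_pos_lt; lra).
  set (v := Rmin (1 / 2) (e / 40)).
  assert (Hv : 0 < v) by (apply Rmin_pos; lra).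
  pose proof (zeta3_rhs_near0 v Hv (Rmin_l _ _)) as H.
  rewrite (zeta3_rhs_const v w Hv Hw) in H. fold e in H.
  pose proof (Rmin_r (1 / 2) (e / 40)). fold v in H0. lra.
Qed.

Theorem mainTheorem18 (w : R) (hw : 0 < w) :
  ex_series (term18 w) /\
  zeta3 =
    - 2 * w ^ 2 * Series (term18 w)
    + 2 * w * Li 2 (exp (- 2 * w))
    + Li 3 (exp (- 2 * w))
    - 2 * w ^ 2 * ln (exp (2 * w) - 1)
    + (10 * w + 3) * w ^ 2 / 3.
Proof.
  assert (Hterm : forall k, term18 w k = / w ^ 2 * log_term w k)
    by (intro k; unfold term18, log_term, pi_m_sq; cbv zeta; field; nra).
  split.
  - apply (ex_series_Rext (fun k => / w ^ 2 * log_term w k)); [intro k; now rewrite Hterm|].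
    apply ex_series_Rscal, ex_series_log_term.
  - rewrite (Series_ext _ _ Hterm), Series_scal_l, <- (zeta3_rhs_eq w hw).
    unfold zeta3_rhs. field. nra.
Qed.
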